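(* Let $g \in \mathbb{R}$. For all $p, q \in \Delta_d^{\mathcal{S}}$, \[ \ell^\Theta_{\mathrm C,\infty}\bigl(\mathcal G_g(p), \mathcal G_g(q)\bigr) \le \ell^\Theta_{\mathrm C,\infty}(p,q). \] In particular, $\mathcal G := \mathcal G_{\bar r^\pi}$ is non-expansive in $\ell^\Theta_{\mathrm C,\infty}$.
   Context: Finite MDP with state set $\mathcal{S}=\{1,\dots,m\}$, finite action set $\mathcal A$, deterministic reward function $R:\mathcal S\times\mathcal A\to[0,1]$, and a fixed policy $\pi$ inducing a transition matrix $P=(P_{ij})$ on $\mathcal S$ that is irreducible and aperiodic with stationary distribution $\mu$. For $i,j\in\mathcal S$, $R_{ij}$ denotes the (finite-valued, $[0,1]$-valued) random one-step reward conditioned on the transition $i\to j$. The gain is $\bar r^\pi=\sum_i\mu_i\sum_j P_{ij}\mathbb E[R_{ij}]$. For $g\in\mathbb R$, $\nu^{(g)}_{ij}:=\mathrm{Law}(R_{ij}-g)$. $\mathcal P_2(\mathbb R)$ is the set of probability laws on $\mathbb R$ with finite second moment; $\mathcal F^{\mathcal S}$ is the set of families $\eta=(\eta_i)_{i\in\mathcal S}$ with $\eta_i\in\mathcal P_2(\mathbb R)$. The operator $\mathcal T_g:\mathcal F^{\mathcal S}\to\mathcal F^{\mathcal S}$ is $(\mathcal T_g\eta)_i:=\sum_j P_{ij}(\nu^{(g)}_{ij}\ast\eta_j)$ ($\ast$ = convolution). Categorical support: $\Theta=\{\theta_1<\dots<\theta_d\}\subset\mathbb R$ with constant stride $\Delta=\theta_{k+1}-\theta_k>0$.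 $\Delta_d$ is the probability simplex in $\mathbb R^d$ and $\Delta_d^{\mathcal S}$ the set of families $p=(p_i)_{i\in\mathcal S}$, $p_i\in\Delta_d$. For $u\in\Delta_d$, $c\in\mathbb R$, $\eta^{u,c}:=\sum_{k=1}^d u_k\delta_{\theta_k+c}$, and for $p\in\Delta_d^{\mathcal S}$, $\eta^{p,c}:=(\eta^{p_i,c})_{i\in\mathcal S}$. The categorical projection $\Pi^{\Theta}_{\mathrm C}$ maps a point mass $\delta_x$ to $\delta_{\theta_1}$ if $x\le\theta_1$, to $\delta_{\theta_d}$ if $x\ge\theta_d$, and to $\frac{\theta_{k+1}-x}{\Delta}\delta_{\theta_k}+\frac{x-\theta_k}{\Delta}\delta_{\theta_{k+1}}$ if $\theta_k\le x\le\theta_{k+1}$; it is extended to laws $\eta$ by $\Pi^\Theta_{\mathrm C}\eta=\int\Pi^\Theta_{\mathrm C}\delta_x\,\eta(\mathrm dx)$, and applied statewise to families. For $g\in\mathbb R$ and $p\in\Delta_d^{\mathcal S}$, $\mathcal G_g(p)\in\Delta_d^{\mathcal S}$ is the unique family $q$ with $\Pi^\Theta_{\mathrm C}\bigl((\mathcal T_g\eta^{p,0})_i\bigr)=\eta^{q_i,0}$ for all $i$. Coordinate Cramér metric: for $u\in\Delta_d$, $F_u(\theta_k):=\sum_{j=1}^k u_j$; $\ell^\Theta_{\mathrm C}(u,v)^2:=\Delta\sum_{k=1}^{d-1}(F_u(\theta_k)-F_v(\theta_k))^2$; for $p,q\in\Delta_d^{\mathcal S}$, $\ell^\Theta_{\mathrm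 C,\infty}(p,q):=\max_{i}\ell^\Theta_{\mathrm C}(p_i,q_i)$. *)

From HB Require Import structures.
From mathcomp Require Import all_boot all_order all_algebra.
From mathcomp Require Import reals.
Set Implicit Arguments.
Unset Strict Implicit.
Unset Printing Implicit Defensive.
Import Order.TTheory GRing.Theory Num.Theory.
Local Open Scope ring_scope.

Section Defs.
Variable R : realType.

(* ---------- Finitely supported laws on R ----------
   A law is a finite list of (atom, weight) pairs; the law it denotes is
   sum_a weight_a * delta_{atom_a}.  Every law appearing in the statement
   (reward laws, categorical laws, their convolutions, mixtures and
   projections) is finitely supported. *)
Definition dlaw := seq (R * R).

Definition is_prob_dlaw (mu : dlaw) : Prop :=
  (forall a, a \in mu -> 0 <= a.2) /\ \sum_(a <- mu) a.2 = 1.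

Definition dmass (mu : dlaw) (x : R) : R := \sum_(a <- mu | a.1 == x) a.2.

Definition dmean (mu : dlaw) : R := \sum_(a <- mu) a.1 * a.2.

Definition dirac (x : R) : dlaw := [:: (x, 1)].

Definition dshift (c : R) (mu : dlaw) : dlaw := [seq (a.1 + c, a.2) | a <- mu].

Definition dscale (c : R) (mu : dlaw) : dlaw := [seq (a.1, c * a.2) | a <- mu].

Definition dconv (mu nu : dlaw) : dlaw :=
  [seq (a.1 + b.1, a.2 * b.2) | a <- mu, b <- nu].

Definition dsum (S : finType) (F : S -> dlaw) : dlaw :=
  flatten [seq F j | j <- enum S].

(* ---------- MDP / Markov-chain data ----------
   P : S -> S -> R is the transition matrix induced by the policy,
   rew i j the (finitely supported) law of R_ij. *)
Definition stochastic (S : finType) (P : S -> S -> R) : Prop :=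
  (forall i j, 0 <= P i j) /\ (forall i, \sum_j P i j = 1).

Definition reward_laws (S : finType) (rew : S -> S -> dlaw) : Prop :=
  forall i j, is_prob_dlaw (rew i j) /\
              (forall a, a \in rew i j -> 0 <= a.1 <= 1).

Definition stationary (S : finType) (P : S -> S -> R) (mu : S -> R) : Prop :=
  (forall i, 0 <= mu i) /\ \sum_i mu i = 1 /\
  (forall j, \sum_i mu i * P i j = mu j).

Definition gain (S : finType) (P : S -> S -> R) (rew : S -> S -> dlaw)
  (mu : S -> R) : R :=
  \sum_i mu i * \sum_j P i j * dmean (rew i j).

Definition nu_g (S : finType) (rew : S -> S -> dlaw) (g : R) (i j : S) : dlaw :=
  dshift (- g) (rew i j).

Definition Tg (S : finType) (P : S -> S -> R) (rew : S -> S -> dlaw) (g : R)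
  (eta : S -> dlaw) (i : S) : dlaw :=
  dsum (fun j => dscale (P i j) (dconv (nu_g rew g i j) (eta j))).

(* ---------- Categorical support ----------
   Theta = {theta_0 < ... < theta_{d-1}} (0-indexed), theta_k = th1 + k*Delta,
   i.e. first atom th1 and constant stride Delta. *)
Definition theta (th1 Delta : R) (k : nat) : R := th1 + k%:R * Delta.

Definition proj_pt (d : nat) (th1 Delta : R) (x : R) : dlaw :=
  let th := theta th1 Delta in
  if x <= th 0%N then dirac (th 0%N)
  else if th d.-1 <= x then dirac (th d.-1)
  else flatten [seq if (th k <= x) && (x < th k.+1)
                    then [:: (th k, (th k.+1 - x) / Delta);
                             (th k.+1, (x - th k) / Delta)]
                    else [::]
               | k <- iota 0 d.-1].

Definition dproj (d : nat) (th1 Delta : R) (mu : dlaw) : dlaw :=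
  flatten [seq dscale a.2 (proj_pt d th1 Delta a.1) | a <- mu].

Definition cat_law (d : nat) (th1 Delta : R) (u : 'I_d -> R) (c : R) : dlaw :=
  [seq (theta th1 Delta (nat_of_ord k) + c, u k) | k : 'I_d <- enum 'I_d].

Definition in_simplex (d : nat) (u : 'I_d -> R) : Prop :=
  (forall k, 0 <= u k) /\ \sum_k u k = 1.

Definition in_simplex_fam (S : finType) (d : nat) (p : S -> 'I_d -> R) : Prop :=
  forall i, in_simplex (p i).

(* G_g(p): the family q with Pi_C((T_g eta^{p,0})_i) = eta^{q_i,0};
   q_i k is the mass of Pi_C((T_g eta^{p,0})_i) at theta_k. *)
Definition Gop (S : finType) (P : S -> S -> R) (rew : S -> S -> dlaw) (g : R)
  (d : nat) (th1 Delta : R) (p : S -> 'I_d -> R) : S -> 'I_d -> R :=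
  fun i k => dmass (dproj d th1 Delta
                      (Tg P rew g (fun j => cat_law th1 Delta (p j) 0) i))
                   (theta th1 Delta k).

Definition cdf (d : nat) (u : 'I_d -> R) (k : 'I_d) : R :=
  \sum_(j < d | (j <= k)%N) u j.

(* l_C(u,v)^2 = Delta * sum_{k=1}^{d-1} (F_u(theta_k) - F_v(theta_k))^2
   (1-indexed k = 1..d-1 is 0-indexed k = 0..d-2) *)
Definition cramer (d : nat) (Delta : R) (u v : 'I_d -> R) : R :=
  Num.sqrt (Delta * \sum_(k < d | (k < d.-1)%N) (cdf u k - cdf v k) ^+ 2).

Definition cramer_inf (S : finType) (d : nat) (Delta : R)
  (p q : S -> 'I_d -> R) : R :=
  \big[Num.max/0]_(i : S) cramer Delta (p i) (q i).

End Defs.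

From HB Require Import structures.
From mathcomp Require Import all_boot all_order all_algebra.
From mathcomp Require Import reals.
From mathcomp.algebra_tactics Require Import ring lra.
Set Implicit Arguments.
Unset Strict Implicit.
Unset Printing Implicit Defensive.
Import Order.TTheory GRing.Theory Num.Theory.
Local Open Scope ring_scope.

(* Fix a state i and a grid index k < d - 1, and write s = (r - g) / Delta for
   a reward value r.  The projection of a point mass delta_x puts mass
   clamp01 (k + 1 - (x - theta_1) / Delta) on {theta_0, ..., theta_k}.
   Summing by parts against the CDF difference D_j of p_j and q_j (the total
   masses agree), the CDF difference of G_g(p)_i and G_g(q)_i at theta_k is a
   mixture, over the successor j and the reward r, of (K_s D_j)(k), where
   K_s k l = clamp01 (k + 1 - s - l) - clamp01 (k - s - l).  Each K_s is
   nonnegative with row and column sums at most 1, hence contracts the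
   Euclidean norm, and Jensen's inequality for the mixture bounds the squared
   Cramer distance at i by the P_i-average of the squared distances at the
   successors, which is at most the square of their maximum. *)

Lemma sum_by_parts (R : comPzRingType) (e f : nat -> R) N :
  \sum_(l < N.+1) e l * f l =
  \sum_(l < N) (\sum_(j < l.+1) e j) * (f l - f l.+1) + (\sum_(j < N.+1) e j) * f N.
Proof.
elim: N => [|N IH]; first by rewrite big_ord0 add0r !big_ord_recr /= !big_ord0 !add0r.
rewrite big_ord_recr /= IH [in RHS]big_ord_recr /= [\sum_(j < N.+2) _]big_ord_recr /=.
ring.
Qed.

Section SumsOfSquares.
Variable R : realFieldType.

Lemma sqr_wsum_le (I : eqType) (s : seq I) (w x : I -> R) :
  (forall i, i \in s -> 0 <= w i) ->
  (\sum_(i <- s) w i * x i) ^+ 2 <=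
  (\sum_(i <- s) w i) * \sum_(i <- s) w i * x i ^+ 2.
Proof.
move=> w_ge0.
set W := \sum_(i <- s) w i; set m := \sum_(i <- s) w i * x i.
set Q := \sum_(i <- s) w i * x i ^+ 2.
have lagrange : \sum_(a <- s) \sum_(b <- s) w a * w b * (x a - x b) ^+ 2
                = 2 * (W * Q - m ^+ 2).
  transitivity (\sum_(a <- s) (w a * x a ^+ 2 * W + w a * Q - 2 * (w a * x a) * m)).
    apply: eq_bigr => a _.
    rewrite /W /Q /m !mulr_sumr -!big_split /= -sumrN -big_split /=.
    by apply: eq_bigr => b _; ring.
  rewrite sumrB big_split /= -!mulr_suml -mulr_sumr -/Q -/W -/m.
  by clearbody W m Q; ring.
have : 0 <= \sum_(a <- s) \sum_(b <- s) w a * w b * (x a - x b) ^+ 2.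
  rewrite big_seq; apply: sumr_ge0 => a sa; rewrite big_seq; apply: sumr_ge0 => b sb.
  by rewrite mulr_ge0 ?sqr_ge0 // mulr_ge0 ?w_ge0.
by rewrite lagrange; lra.
Qed.

Lemma sum_sqr_mean_le (I : eqType) (K : finType) (s : seq I) (w : I -> R)
    (x : I -> K -> R) :
  (forall i, i \in s -> 0 <= w i) -> \sum_(i <- s) w i = 1 ->
  \sum_k (\sum_(i <- s) w i * x i k) ^+ 2 <= \sum_(i <- s) w i * \sum_k x i k ^+ 2.
Proof.
move=> w_ge0 w_sum1; under [X in _ <= X]eq_bigr do rewrite mulr_sumr.
rewrite exchange_big /=; apply: ler_sum => k _.
by have := sqr_wsum_le (x^~ k) w_ge0; rewrite w_sum1 mul1r.
Qed.

Lemma sum_sqr_substochastic_le (I J : finType) (W : I -> J -> R) (x : J -> R) :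
  (forall i j, 0 <= W i j) ->
  (forall i, \sum_j W i j <= 1) -> (forall j, \sum_i W i j <= 1) ->
  \sum_i (\sum_j W i j * x j) ^+ 2 <= \sum_j x j ^+ 2.
Proof.
move=> W_ge0 row_le1 col_le1.
apply: (@le_trans _ _ (\sum_i \sum_j W i j * x j ^+ 2)).
  apply: ler_sum => i _; apply: le_trans (sqr_wsum_le _ (fun j _ => W_ge0 i j)) _.
  rewrite -[X in _ <= X]mul1r ler_wpM2r ?row_le1 //.
  by apply: sumr_ge0 => j _; rewrite mulr_ge0 ?sqr_ge0.
rewrite exchange_big /=; apply: ler_sum => j _.
by rewrite -mulr_suml -[X in _ <= X]mul1r ler_wpM2r ?sqr_ge0 ?col_le1.
Qed.

End SumsOfSquares.

Section Clamp.
Variable R : realFieldType.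
Implicit Types s t : R.

Definition clamp01 t : R := if t <= 0 then 0 else if 1 <= t then 1 else t.

Lemma clamp01_ge0 t : 0 <= clamp01 t.
Proof. by rewrite /clamp01; case: ifP => // t_gt0; case: ifP => //; lra. Qed.

Lemma clamp01_le1 t : clamp01 t <= 1.
Proof. by rewrite /clamp01; case: ifP => [|_]; last case: ifP => //; lra. Qed.

Lemma clamp01_homo_le : {homo clamp01 : s t / s <= t}.
Proof.
move=> s t st; rewrite /clamp01.
by do !case: ifP => //; lra.
Qed.

Lemma clamp01_le0 t : t <= 0 -> clamp01 t = 0.
Proof. by rewrite /clamp01 => ->. Qed.

Lemma clamp01_ge1 t : 1 <= t -> clamp01 t = 1.
Proof. by move=> t_ge1; rewrite /clamp01 t_ge1; case: ifP => //; lra. Qed.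

Lemma clamp01_id t : 0 <= t <= 1 -> clamp01 t = t.
Proof. by rewrite /clamp01; do !case: ifP => //; lra. Qed.

Lemma clamp01_interp (k m : nat) t : m%:R <= t < m.+1%:R ->
  (m <= k)%:R * (m.+1%:R - t) + (m < k)%:R * (t - m%:R) = clamp01 (k.+1%:R - t).
Proof.
rewrite -!natr1 => t_mm1.
case: (ltngtP m k) => [mk|km|<-] /=.
- rewrite clamp01_ge1; first lra.
  have : m%:R + 1 <= k%:R :> R by rewrite natr1 ler_nat.
  lra.
- rewrite clamp01_le0; first lra.
  have : k%:R + 1 <= m%:R :> R by rewrite natr1 ler_nat.
  lra.
- by rewrite clamp01_id; lra.
Qed.

Definition shift_kernel s (k l : nat) : R :=
  clamp01 (k.+1%:R - (s + l%:R)) - clamp01 (k.+1%:R - (s + l.+1%:R)).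

Lemma shift_kernel_ge0 s k l : 0 <= shift_kernel s k l.
Proof. by rewrite subr_ge0 clamp01_homo_le // -natr1; lra. Qed.

Lemma sum_shift_kernel_row s k N : \sum_(l < N) shift_kernel s k l <= 1.
Proof.
rewrite -(big_mkord xpredT).
rewrite (telescope_sumr_eq (fun l : nat => - clamp01 (k.+1%:R - (s + l%:R)))) //.
  have := clamp01_ge0 (k.+1%:R - (s + N%:R)).
  by have := clamp01_le1 (k.+1%:R - (s + 0%:R)); lra.
by move=> l _; rewrite /shift_kernel; ring.
Qed.

Lemma sum_shift_kernel_col s l N : \sum_(k < N) shift_kernel s k l <= 1.
Proof.
rewrite -(big_mkord xpredT (fun k => shift_kernel s k l)).
rewrite (telescope_sumr_eq (fun k : nat => clamp01 (k%:R - (s + l%:R)))) //.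
  have := clamp01_ge0 (0%:R - (s + l%:R)).
  by have := clamp01_le1 (N%:R - (s + l%:R)); lra.
by move=> k _; rewrite /shift_kernel -!natr1 addrA; congr (_ - clamp01 _); ring.
Qed.

End Clamp.

Section FiniteLaws.
Variable R : realType.
Implicit Types (L : dlaw R) (f : R -> R).

Definition dexpect L f : R := \sum_(a <- L) a.2 * f a.1.

Lemma eq_dexpect L f1 f2 : f1 =1 f2 -> dexpect L f1 = dexpect L f2.
Proof. by move=> f12; apply: eq_bigr => a _; rewrite f12. Qed.

Lemma dexpect_Tg (S : finType) (P : S -> S -> R) rew g eta i f :
  dexpect (Tg P rew g eta i) f =
  \sum_j P i j * \sum_(r <- rew i j) r.2 * dexpect (eta j) (fun y => f (r.1 - g + y)).
Proof.
rewrite /dexpect /Tg /dsum big_flatten /= big_map big_enum /=; apply: eq_bigr => j _.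
rewrite big_map big_allpairs_dep /= big_map mulr_sumr; apply: eq_bigr => r _.
by rewrite !mulr_sumr; apply: eq_bigr => b _ /=; ring.
Qed.

Lemma dexpect_cat_law d th1 Delta (u : 'I_d -> R) c f :
  dexpect (cat_law th1 Delta u c) f = \sum_l u l * f (theta th1 Delta l + c).
Proof. by rewrite /dexpect big_map big_enum. Qed.

Lemma dexpect_dproj d th1 Delta L f :
  dexpect (dproj d th1 Delta L) f =
  dexpect L (fun x => dexpect (proj_pt d th1 Delta x) f).
Proof.
rewrite /dexpect big_flatten /= big_map; apply: eq_bigr => a _.
by rewrite big_map mulr_sumr; apply: eq_bigr => b _ /=; rewrite mulrA.
Qed.

Lemma cdf_dmass d L (x : nat -> R) (k : 'I_d) :
  cdf (fun j : 'I_d => dmass L (x j)) k =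
  dexpect L (fun y => \sum_(j < d | (j <= k)%N) (y == x j)%:R).
Proof.
rewrite /cdf /dmass /dexpect; under eq_bigr do rewrite big_mkcond.
rewrite exchange_big /=; apply: eq_bigr => a _; rewrite mulr_sumr.
by apply: eq_bigr => j _; case: eqP; rewrite ?mulr1 ?mulr0.
Qed.

End FiniteLaws.

Section Grid.
Variables (R : realType) (th1 Delta : R) (n : nat).
Hypothesis Delta_gt0 : 0 < Delta.
Local Notation th := (theta th1 Delta).
Local Notation scaled x := ((x - th1) / Delta).

Lemma theta_inj : injective th.
Proof.
move=> a b /addrI /mulIf; rewrite gt_eqF // => /(_ isT) /eqP.
by rewrite eqr_nat => /eqP.
Qed.

Lemma theta_leE j x : (th j <= x) = (j%:R <= scaled x).
Proof. by rewrite ler_pdivlMr // /theta; apply/idP/idP; lra. Qed.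

Lemma theta_geE j x : (x <= th j) = (scaled x <= j%:R).
Proof. by rewrite ler_pdivrMr // /theta; apply/idP/idP; lra. Qed.

Lemma theta_gtE j x : (x < th j) = (scaled x < j%:R).
Proof. by rewrite ltr_pdivrMr // /theta; apply/idP/idP; lra. Qed.

Definition grid_le (k : nat) (y : R) : R := \sum_(j < n.+2 | (j <= k)%N) (y == th j)%:R.

Lemma grid_le_theta k m : (m < n.+2)%N -> grid_le k (th m) = (m <= k)%:R.
Proof.
move=> m_lt; rewrite /grid_le; under eq_bigr do rewrite (inj_eq theta_inj).
case: (leqP m k) => [m_le|k_lt].
  rewrite (bigD1 (Ordinal m_lt)) //= eqxx big1 ?addr0 // => j /andP[_].
  by rewrite -val_eqE /= eq_sym => /negbTE ->.
by rewrite big1 // => j j_le; rewrite gtn_eqF // (leq_ltn_trans j_le k_lt).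
Qed.

Definition proj_cdf (k : nat) (x : R) : R := clamp01 (k.+1%:R - scaled x).

Lemma dexpect_proj_block k m x : (m < n.+1)%N ->
  dexpect (if (th m <= x)%R && (x < th m.+1)%R
           then [:: (th m, (th m.+1 - x) / Delta); (th m.+1, (x - th m) / Delta)]
           else [::]) (grid_le k)
  = ((th m <= x)%R%:R - (th m.+1 <= x)%R%:R) * proj_cdf k x.
Proof.
move=> m_lt; rewrite !theta_leE theta_gtE /proj_cdf.
case: ifP => [/andP[m_le lt_m1] | not_in].
  have m_lt2 : (m < n.+2)%N := ltnW m_lt.
  rewrite /dexpect !big_cons big_nil /= !grid_le_theta //.
  rewrite [(_.+1%:R <= _)%R]leNgt lt_m1.
  have -> : (th m.+1 - x) / Delta = m.+1%:R - scaled x.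
    by rewrite /theta -!natr1; field; exact: lt0r_neq0.
  have -> : (x - th m) / Delta = scaled x - m%:R.
    by rewrite /theta; field; exact: lt0r_neq0.
  by rewrite -(@clamp01_interp _ k m) ?m_le ?lt_m1 //=; ring.
rewrite /dexpect big_nil.
have [m1_le|lt_m1] := lerP (m.+1%:R) (scaled x).
  by rewrite (le_trans _ m1_le) ?ler_nat ?leqnSn // subrr mul0r.
by move: not_in; rewrite lt_m1 andbT => ->; rewrite subrr mul0r.
Qed.

Lemma dexpect_proj_pt k x : (k < n.+1)%N ->
  dexpect (proj_pt n.+2 th1 Delta x) (grid_le k) = proj_cdf k x.
Proof.
move=> k_lt; rewrite /proj_pt -[(n.+2).-1]/n.+1 /proj_cdf.
have k1_le : 1 <= k.+1%:R :> R by rewrite ler1n.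
have k1_len : k.+1%:R <= n.+1%:R :> R by rewrite ler_nat.
case: ifP => [x_le0|x_gt0].
  rewrite /dexpect big_seq1 /= grid_le_theta // mul1r clamp01_ge1 //.
  by move: x_le0; rewrite theta_geE; lra.
case: ifP => [x_ge|x_lt].
  rewrite /dexpect big_seq1 /= grid_le_theta // leqNgt k_lt mul1r clamp01_le0 //.
  by move: x_ge; rewrite theta_leE; lra.
(* Only the block of the cell containing x is nonempty; writing its indicator as
   a difference of two step functions makes the sum over the cells telescope. *)
rewrite /dexpect big_flatten big_map.
rewrite (eq_big_seq (fun m => ((th m <= x)%R%:R - (th m.+1 <= x)%R%:R) * proj_cdf k x)).
  rewrite -mulr_suml -[iota 0 n.+1]/(index_iota 0 n.+1).
  rewrite (telescope_sumr_eq (fun m => - (th m <= x)%R%:R)) => [|//|m _]; last first.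
    by rewrite opprK addrC.
  by rewrite x_lt leNgt lt_def x_gt0 andbF /proj_cdf /=; ring.
by move=> m; rewrite mem_iota add0n => /andP[_ m_lt]; exact: dexpect_proj_block.
Qed.

End Grid.

Section CategoricalOperator.
Variables (R : realType) (th1 Delta : R) (n : nat).
Hypothesis Delta_gt0 : 0 < Delta.
Local Notation th := (theta th1 Delta).
Local Notation cdf_sub u v l := (cdf u (inord l) - cdf v (inord l)).

Lemma sum_inordE (u : 'I_n.+2 -> R) : \sum_k u k = \sum_(j < n.+2) u (inord j).
Proof. by apply: eq_bigr => j _; rewrite inord_val. Qed.

Lemma cdf_inordE (u : 'I_n.+2 -> R) m : (m < n.+2)%N ->
  cdf u (inord m) = \sum_(j < m.+1) u (inord j).
Proof.
move=> m_lt; rewrite /cdf inordK //.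
rewrite (eq_bigr (fun j : 'I_n.+2 => u (inord j))) => [|j _]; last by rewrite inord_val.
by rewrite (eq_bigl (fun j : 'I_n.+2 => (j < m.+1)%N)) ?(big_ord_narrow m_lt).
Qed.

Lemma cramer_sqrE (u v : 'I_n.+2 -> R) :
  cramer Delta u v ^+ 2 = Delta * \sum_(l < n.+1) cdf_sub u v l ^+ 2.
Proof.
rewrite /cramer sqr_sqrtr; last first.
  exact: mulr_ge0 (ltW Delta_gt0) (sumr_ge0 _ (fun k _ => sqr_ge0 _)).
congr (_ * _); rewrite -[(n.+2).-1]/n.+1 (big_ord_narrow (leqnSn n.+1)).
apply: eq_bigr => l _; have -> // : widen_ord (leqnSn n.+1) l = inord l.
by apply: val_inj; rewrite /= inordK //; exact: leqW (ltn_ord l).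
Qed.

Lemma proj_cdf_subE c k l :
  proj_cdf th1 Delta k (c + th l) - proj_cdf th1 Delta k (c + th l.+1) =
  shift_kernel (c / Delta) k l.
Proof.
rewrite /proj_cdf /shift_kernel /theta; congr (clamp01 _ - clamp01 _).
all: by field; exact: lt0r_neq0.
Qed.

Lemma sum_sub_proj_cdfE (u v : 'I_n.+2 -> R) c k : \sum_l u l = \sum_l v l ->
  \sum_l u l * proj_cdf th1 Delta k (c + th l) -
  \sum_l v l * proj_cdf th1 Delta k (c + th l)
  = \sum_(l < n.+1) shift_kernel (c / Delta) k l * cdf_sub u v l.
Proof.
move=> same_mass; rewrite -sumrB.
pose w j := u (inord j) - v (inord j); pose h j := proj_cdf th1 Delta k (c + th j).
rewrite (eq_bigr (fun l : 'I_n.+2 => w l * h l)) => [|l _]; last first.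
  by rewrite /w inord_val mulrBl.
rewrite sum_by_parts.
have -> : \sum_(j < n.+2) w j = 0 by rewrite sumrB -!sum_inordE same_mass subrr.
rewrite mul0r addr0; apply: eq_bigr => l _.
rewrite mulrC /h proj_cdf_subE sumrB -!cdf_inordE //; exact: leqW (ltn_ord l).
Qed.

Variables (S : finType) (P : S -> S -> R) (rew : S -> S -> dlaw R) (g : R).
Local Notation G := (Gop P rew g th1 Delta).

Lemma cdf_GopE (p : S -> 'I_n.+2 -> R) i k : (k < n.+1)%N ->
  cdf (G p i) (inord k) =
  \sum_j P i j * \sum_(r <- rew i j) r.2 *
    \sum_l p j l * proj_cdf th1 Delta k (r.1 - g + th l).
Proof.
move=> k_lt; rewrite /Gop cdf_dmass dexpect_dproj inordK; last exact: leqW.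
rewrite (eq_dexpect _ (fun x => dexpect_proj_pt th1 Delta_gt0 x k_lt)) dexpect_Tg.
apply: eq_bigr => j _; congr (_ * _); apply: eq_bigr => r _; congr (_ * _).
by rewrite dexpect_cat_law; under eq_bigr do rewrite addr0.
Qed.

Lemma cdf_Gop_subE (p q : S -> 'I_n.+2 -> R) i (k : 'I_n.+1) :
  (forall j, \sum_l p j l = \sum_l q j l) ->
  cdf_sub (G p i) (G q i) k =
  \sum_j P i j * \sum_(r <- rew i j) r.2 *
    \sum_(l < n.+1) shift_kernel ((r.1 - g) / Delta) k l * cdf_sub (p j) (q j) l.
Proof.
move=> same_mass; rewrite !cdf_GopE // -sumrB; apply: eq_bigr => j _.
rewrite -mulrBr -sumrB; congr (_ * _); apply: eq_bigr => r _.
by rewrite -mulrBr sum_sub_proj_cdfE.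
Qed.

Lemma cramer_Gop_sqr_le (p q : S -> 'I_n.+2 -> R) i :
  stochastic P -> reward_laws rew -> (forall j, \sum_l p j l = \sum_l q j l) ->
  cramer Delta (G p i) (G q i) ^+ 2 <= \sum_j P i j * cramer Delta (p j) (q j) ^+ 2.
Proof.
move=> [P_ge0 P_sum1] rew_prob same_mass.
rewrite cramer_sqrE; under [X in _ <= X]eq_bigr do rewrite cramer_sqrE mulrCA.
rewrite -mulr_sumr ler_wpM2l ?(ltW Delta_gt0) //.
under eq_bigr do rewrite cdf_Gop_subE //.
apply: le_trans (sum_sqr_mean_le _ (fun j _ => P_ge0 i j) (P_sum1 i)) _.
apply: ler_sum => j _; rewrite ler_wpM2l //.
have [[r_ge0 r_sum1] _] := rew_prob i j.
apply: le_trans (sum_sqr_mean_le _ r_ge0 r_sum1) _.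
rewrite -[X in _ <= X]mul1r -r_sum1 mulr_suml big_seq [X in _ <= X]big_seq.
apply: ler_sum => r r_in; rewrite ler_wpM2l ?r_ge0 //.
apply: sum_sqr_substochastic_le => *;
  [exact: shift_kernel_ge0 | exact: sum_shift_kernel_row | exact: sum_shift_kernel_col].
Qed.

End CategoricalOperator.

Section CramerMax.
Variables (R : realType) (d : nat) (Delta : R).
Implicit Types u v : 'I_d -> R.

Lemma cramer_ge0 u v : 0 <= cramer Delta u v.
Proof. exact: sqrtr_ge0. Qed.

Lemma cramer_dim_le1 u v : (d <= 1)%N -> cramer Delta u v = 0.
Proof.
move=> d_le1; rewrite /cramer; have -> : d.-1 = 0%N by case: d {u v} d_le1 => [|[|]].
by rewrite big_pred0 ?mulr0 ?sqrtr0.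
Qed.

Lemma cramer_le_inf (S : finType) (p q : S -> 'I_d -> R) i :
  cramer Delta (p i) (q i) <= cramer_inf Delta p q.
Proof. exact: le_bigmax. Qed.

End CramerMax.

Lemma cramer_inf_Gop_le (R : realType) (S : finType) (P : S -> S -> R)
    (rew : S -> S -> dlaw R) (g : R) (d : nat) (th1 Delta : R) (p q : S -> 'I_d -> R) :
  0 < Delta -> stochastic P -> reward_laws rew ->
  (forall j, \sum_l p j l = \sum_l q j l) ->
  cramer_inf Delta (Gop P rew g th1 Delta p) (Gop P rew g th1 Delta q)
    <= cramer_inf Delta p q.
Proof.
move=> Delta_gt0 P_stoch rew_prob same_mass.
apply: bigmax_le => [|i _]; first exact: bigmax_ge_id.
case: d p q same_mass => [|[|n]] p q same_mass;
  [by rewrite cramer_dim_le1 // bigmax_ge_id..|].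
rewrite -ler_sqr ?nnegrE ?cramer_ge0 ?bigmax_ge_id //.
apply: le_trans (cramer_Gop_sqr_le th1 Delta_gt0 g i P_stoch rew_prob same_mass) _.
have [P_ge0 P_sum1] := P_stoch.
rewrite -[X in _ <= X]mul1r -(P_sum1 i) mulr_suml; apply: ler_sum => j _.
by rewrite ler_wpM2l // ler_sqr ?nnegrE ?cramer_ge0 ?bigmax_ge_id ?cramer_le_inf.
Qed.

Theorem theorem1 (R : realType) (S : finType) (P : S -> S -> R)
  (rew : S -> S -> dlaw R) (mu : S -> R) (d : nat) (th1 Delta : R) :
  stochastic P -> reward_laws rew -> stationary P mu -> 0 < Delta ->
  (forall (g : R) (p q : S -> 'I_d -> R),
     in_simplex_fam p -> in_simplex_fam q ->
     cramer_inf Delta (Gop P rew g th1 Delta p) (Gop P rew g th1 Delta q)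
       <= cramer_inf Delta p q) /\
  (forall p q : S -> 'I_d -> R,
     in_simplex_fam p -> in_simplex_fam q ->
     cramer_inf Delta (Gop P rew (gain P rew mu) th1 Delta p)
                      (Gop P rew (gain P rew mu) th1 Delta q)
       <= cramer_inf Delta p q).
Proof.
move=> P_stoch rew_prob _ Delta_gt0.
have nonexpansive g p q : in_simplex_fam p -> in_simplex_fam q ->
    cramer_inf Delta (Gop P rew g th1 Delta p) (Gop P rew g th1 Delta q)
      <= cramer_inf Delta p q.
  move=> p_simplex q_simplex; apply: cramer_inf_Gop_le => // j.
  by have [_ ->] := p_simplex j; have [_ ->] := q_simplex j.
by split=> [|p q]; apply: nonexpansive.
Qed.
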